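(* For a random threshold graph $G$ on $n\ge1$ vertices and every integer $d\ge0$, $$P(\mathrm{degen}(G)=d)=\left(\tfrac12\right)^{n-1}\binom{n-1}{d}.$$
   Context: A threshold graph on $n\ge1$ vertices is built from a base vertex $v_0$ by successively adding $v_1,\dots,v_{n-1}$, each either isolated (adjacent to no earlier vertex) or dominating (adjacent to all earlier vertices); its creation sequence $\mathrm{seq}(G)=s_1\cdots s_{n-1}$ has $s_i=1$ if $v_i$ is dominating and $s_i=0$ otherwise, and each unlabeled threshold graph on $n$ vertices corresponds to exactly one binary string of length $n-1$. A random threshold graph on $n$ vertices is one whose creation sequence is uniformly distributed over all $2^{n-1}$ binary strings of length $n-1$. The degeneracy $\mathrm{degen}(G)$ is the maximum over nonempty induced subgraphs $H$ of $G$ of the minimum degree of $H$. *)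

From mathcomp Require Import all_boot all_order all_algebra.
Set Implicit Arguments. Unset Strict Implicit. Unset Printing Implicit Defensive.

(* Threshold graph on vertices 'I_n = {v_0,...,v_(n-1)} built from the
   creation sequence s = s_1 ... s_(n-1), stored as the tuple
   [s_1; ...; s_(n-1)] (so s_i = nth false s i.-1).
   For i <> j, v_i ~ v_j iff v_(max i j) was added as dominating. *)
Definition tg_adj (n : nat) (s : (n.-1).-tuple bool) (i j : 'I_n) : bool :=
  (i != j) && nth false s (maxn i j).-1.

(* minimum degree of the induced subgraph on S (meaningful for S nonempty;
   the default #|S| exceeds every degree inside S) *)
Definition min_deg_in (n : nat) (adj : rel 'I_n) (S : {set 'I_n}) : nat :=
  \big[minn/#|S|]_(v in S) #|[set u in S | adj v u]|.

Definition degen (n : nat) (adj : rel 'I_n) : nat :=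
  \max_(S : {set 'I_n} | S != set0) min_deg_in adj S.

From mathcomp Require Import all_boot all_order all_algebra.
Import Order.TTheory GRing.Theory.

(* The degeneracy of a threshold graph is its number of dominating vertices
   [k].  In any induced subgraph, the vertex added first is adjacent only to
   later dominating vertices, so its degree is at most [k]; conversely [v_0]
   together with the [k] dominating vertices is a clique on [k + 1] vertices.
   Hence degen G = d for exactly 'C(n - 1, d) creation sequences. *)

Section Degeneracy.

Variables (n : nat) (adj : rel 'I_n).

Lemma min_deg_in_le (S : {set 'I_n}) v k :
  v \in S -> #|[set u in S | adj v u]| <= k -> min_deg_in adj S <= k.
Proof. by rewrite /min_deg_in -minEnat; apply: (@bigmin_inf _ nat). Qed.

Lemma min_deg_in_clique (S : {set 'I_n}) :
  {in S &, forall u v, u != v -> adj u v} -> #|S|.-1 <= min_deg_in adj S.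
Proof.
move=> clique; rewrite /min_deg_in -minEnat.
apply/(@bigmin_geP _ nat); split=> [|v vS]; first exact: leq_pred.
rewrite (cardsD1 v S) vS add1n /=; apply/subset_leq_card/subsetP => u.
by rewrite !inE => /andP[uv uS]; rewrite uS clique // eq_sym.
Qed.

Lemma degen_ge_clique (S : {set 'I_n}) :
  S != set0 -> {in S &, forall u v, u != v -> adj u v} -> #|S|.-1 <= degen adj.
Proof.
move=> S0 clique; apply: leq_trans (min_deg_in_clique _ clique) _.
exact: (@leq_bigmax_cond _ (fun S => S != set0) (min_deg_in adj) S S0).
Qed.

Lemma degen_le k :
  (forall S : {set 'I_n}, S != set0 ->
     exists2 v, v \in S & #|[set u in S | adj v u]| <= k) ->
  degen adj <= k.
Proof.
move=> low_deg; apply/bigmax_leqP => S /low_deg[v vS deg_v].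
exact: min_deg_in_le vS deg_v.
Qed.

End Degeneracy.

Section ThresholdGraph.

Variables (m : nat) (s : m.-tuple bool).

Definition dominating : {set 'I_m.+1} := [set w : 'I_m.+1 | (0 < w) && nth false s w.-1].

Lemma card_dominating : #|dominating| = #|[set i : 'I_m | tnth s i]|.
Proof.
rewrite -[RHS](card_imset _ (@lift_inj m.+1 ord0)); apply: eq_card => w.
rewrite inE; apply/andP/imsetP => [[w_gt0 sw] | [i]].
  have w_lt : w.-1 < m by rewrite -ltnS prednK.
  exists (Ordinal w_lt); first by rewrite inE (tnth_nth false).
  by apply: ord_inj; rewrite lift0 /= prednK.
by rewrite inE => si ->; rewrite lift0 -(tnth_nth false).
Qed.

Lemma tg_adj_first_vertex (S : {set 'I_m.+1}) (u : 'I_m.+1) :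
  (forall w, w \in S -> u <= w) ->
  [set w in S | @tg_adj m.+1 s u w] \subset dominating.
Proof.
move=> u_min; apply/subsetP => w; rewrite !inE /tg_adj => /and3P[wS uw sw].
have u_le_w : u <= w by exact: u_min.
rewrite (maxn_idPr u_le_w) in sw; rewrite sw andbT.
by apply: leq_ltn_trans (leq0n u) _; rewrite ltn_neqAle u_le_w andbT.
Qed.

Lemma tg_adj_clique :
  {in ord0 |: dominating &, forall u v, u != v -> @tg_adj m.+1 s u v}.
Proof.
move=> u v uS vS uv; rewrite /tg_adj uv /=.
have [w wS def_w] : exists2 w, w \in ord0 |: dominating & val w = maxn u v.
  by case: leqP => _; [exists v | exists u].
have w_gt0 : 0 < w.
  rewrite def_w leq_max !lt0n -negb_and; apply: contra uv => /andP[/eqP u0 /eqP v0].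
  by apply/eqP/val_inj; rewrite /= u0 v0.
rewrite -def_w; move: wS; rewrite !inE => /orP[/eqP w0 | /andP[] //].
by rewrite w0 in w_gt0.
Qed.

Lemma degen_tg_adj : degen (@tg_adj m.+1 s) = #|[set i : 'I_m | tnth s i]|.
Proof.
rewrite -card_dominating; apply/eqP; rewrite eqn_leq; apply/andP; split.
  apply: degen_le => S /set0Pn[x xS].
  have [u uS u_min] := @arg_minnP _ x (mem S) val xS.
  by exists u => //; apply/subset_leq_card/tg_adj_first_vertex.
have -> : #|dominating| = #|ord0 |: dominating|.-1.
  by rewrite cardsU1 inE ltnn.
by apply: degen_ge_clique tg_adj_clique; apply/set0Pn; exists ord0; rewrite setU11.
Qed.

End ThresholdGraph.

Lemma card_bool_tuples_weight m d :
  #|[set s : m.-tuple bool | #|[set i : 'I_m | tnth s i]| == d]| = 'C(m, d).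
Proof.
pose support (s : m.-tuple bool) := [set i : 'I_m | tnth s i].
have support_inj : injective support.
  by move=> s t /setP e; apply: eq_from_tnth => i; have := e i; rewrite !inE.
rewrite -[m in RHS]card_ord -card_draws -(card_imset _ support_inj).
apply: eq_card => A; rewrite inE; apply/imsetP/idP => [[t] | A_d].
  by rewrite inE => t_d ->.
exists [tuple i \in A | i < m]; last by apply/setP => i; rewrite !inE tnth_mktuple.
by rewrite inE -(eqP A_d); apply/eqP/eq_card => i; rewrite !inE tnth_mktuple.
Qed.

Local Open Scope ring_scope.

Theorem mainTheorem13 (n d : nat) (hn : (1 <= n)%N) :
  (#|[set s : (n.-1).-tuple bool | degen (tg_adj s) == d]|%:R
     / (2 ^ n.-1)%:R : rat)
  = (1 / 2) ^+ n.-1 * ('C(n.-1, d))%:R.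
Proof.
case: n hn => [//|m] _ /=.
have -> : [set s : m.-tuple bool | degen (@tg_adj m.+1 s) == d]
        = [set s : m.-tuple bool | #|[set i : 'I_m | tnth s i]| == d].
  by apply/setP => s; rewrite !inE degen_tg_adj.
by rewrite card_bool_tuples_weight natrX div1r exprVn mulrC.
Qed.
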